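(* Every Steiner triple system on $27$ points of $3$-rank at most $24$ is resolvable.
   Context: A Steiner triple system $STS(v)$ is a pair $(\mathcal{P},\mathcal{B})$ with $|\mathcal{P}|=v$ and $\mathcal{B}$ a set of $3$-subsets (blocks) such that every $2$-subset of $\mathcal{P}$ lies in exactly one block. Its $3$-rank is the rank over $\mathbb{F}_3$ of its block–point incidence matrix. A parallel class is a set of blocks partitioning $\mathcal{P}$; the system is resolvable if $\mathcal{B}$ can be partitioned into parallel classes. *)

From HB Require Import structures.
From mathcomp Require Import all_boot all_order all_algebra.
Set Implicit Arguments. Unset Strict Implicit. Unset Printing Implicit Defensive.

Definition is_STS (T : finType) (B : {set {set T}}) : Prop :=
  (forall b, b \in B -> #|b| = 3) /\
  (forall x y : T, x != y -> exists! b, b \in B /\ x \in b /\ y \in b).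

Definition incidence_mx (F : fieldType) (T : finType) (B : {set {set T}})
  : 'M[F]_(#|B|, #|T|) :=
  \matrix_(i < #|B|, j < #|T|)
     (if (enum_val j : T) \in (enum_val i : {set T}) then 1%R else 0%R).

Definition p_rank (p : nat) (T : finType) (B : {set {set T}}) : nat :=
  \rank (incidence_mx 'F_p B).

Definition parallel_class (T : finType) (C : {set {set T}}) : bool :=
  partition C [set: T].

Definition resolvable (T : finType) (B : {set {set T}}) : Prop :=
  exists P : {set {set {set T}}},
    partition P B /\ (forall C, C \in P -> parallel_class C).

(* Functions h : T -> F_3 whose sum over every block vanishes form
   the left kernel of the incidence matrix, of dimension 27 - rank >= 3.  Besides
   the constants it contains f and g such that no nontrivial combination
   a f + c g is constant.  For such a zero-sum h the third point z of the block
   {x, y, z} satisfies h z = -(h x + h y); this makes every nonconstant h take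
   each value on exactly 9 points.  Hence phi = (f, g) : T -> F_3^2 maps blocks
   onto lines (or points) of the affine plane AG(2,3), the preimages of the 12
   lines of the plane have 9 points each, and double counting shows that every
   fibre of phi has 3 points and is itself a block.  Over a line of the plane,
   the 9 points together with the three fibres and the remaining ("cross")
   blocks form an affine plane of order 3, in which parallelism (being equal or
   disjoint) has three classes, each partitioning the 9 points.  Colouring a
   block by "vertical" (a fibre), or else by its direction and the index of its
   parallel class (matched across the three parallel lines through base points),
   every colour class is a parallel class, which gives the resolution. *)

From HB Require Import structures.
From mathcomp Require Import all_boot all_order all_algebra.
From mathcomp Require Import zify ring.

Set Implicit Arguments.
Unset Strict Implicit.
Unset Printing Implicit Defensive.
Import GRing.Theory.

Section Colourings.
Variables (T : finType) (B : {set {set T}}) (C : eqType) (colour : {set T} -> C).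
Hypothesis B_nonempty : set0 \notin B.
Hypothesis exact_cover : forall b, b \in B ->
  forall x, exists! b', [/\ b' \in B, x \in b' & colour b' = colour b].

Definition colour_class (b : {set T}) : {set {set T}} :=
  [set b' in B | colour b' == colour b].

Lemma colour_class_parallel b : b \in B -> parallel_class (colour_class b).
Proof.
move=> Bb; apply/and3P; split.
- apply/eqP/setP => x; rewrite inE; apply/bigcupP.
  have [b' [[Bb' xb' cb'] _]] := exact_cover Bb x.
  by exists b' => //; rewrite inE Bb' cb' eqxx.
- apply/trivIsetP => b1 b2; rewrite !inE => /andP[B1 /eqP c1] /andP[B2 /eqP c2].
  move=> ne; rewrite -setI_eq0; apply: contraNT ne => /set0Pn[x].
  rewrite inE => /andP[x1 x2].
  have [b0 [_ uniq_x]] := exact_cover Bb x.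
  by rewrite -(uniq_x b1) ?(uniq_x b2).
- by rewrite inE negb_and B_nonempty.
Qed.

Lemma resolvable_of_colouring : resolvable B.
Proof.
exists (colour_class @: B); split; last first.
  by move=> _ /imsetP[b Bb ->]; exact: colour_class_parallel.
apply/and3P; split.
- apply/eqP/setP => b; apply/bigcupP/idP => [[_ /imsetP[b0 _ ->]] | Bb].
    by rewrite inE => /andP[].
  by exists (colour_class b); [exact: imset_f | rewrite inE Bb eqxx].
- apply/trivIsetP => _ _ /imsetP[b1 _ ->] /imsetP[b2 _ ->].
  move=> ne; rewrite -setI_eq0; apply: contraNT ne => /set0Pn[b].
  rewrite !inE => /andP[/andP[_ /eqP c1] /andP[_ /eqP c2]].
  by apply/eqP/setP => b'; rewrite !inE -c1 -c2.
- apply/imsetP => -[b Bb E].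
  have : b \in colour_class b by rewrite inE Bb eqxx.
  by rewrite -E inE.
Qed.

End Colourings.

Lemma cards3 (T : finType) (x y z : T) : x != y -> x != z -> y != z ->
  #|[set x; y; z]| = 3.
Proof. by move=> xy xz yz; rewrite -setUA cardsU1 cards2 !inE negb_or xy xz yz. Qed.

Section SteinerTripleSystems.
Variables (T : finType) (B : {set {set T}}).
Hypothesis block_card : forall b, b \in B -> #|b| = 3.
Hypothesis pair_block :
  forall x y : T, x != y -> exists! b, b \in B /\ x \in b /\ y \in b.

Definition block_of (x y : T) : {set T} :=
  odflt set0 [pick b in B | (x \in b) && (y \in b)].

Definition third (x y : T) : T :=
  odflt x [pick z in block_of x y | (z != x) && (z != y)].

Lemma block_ofP x y : x != y -> [/\ block_of x y \in B, x \in block_of x y & y \in block_of x y].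
Proof.
move=> xy; rewrite /block_of; case: pickP => [b /andP[Bb /andP[xb yb]] | none] //=.
have [b [[Bb [xb yb]] _]] := pair_block xy.
by move: (none b); rewrite Bb xb yb.
Qed.

Lemma block_of_uniq x y b : x != y -> b \in B -> x \in b -> y \in b -> b = block_of x y.
Proof.
move=> xy Bb xb yb; have [b0 [_ uniq_b]] := pair_block xy.
have [Bxy xxy yxy] := block_ofP xy.
by rewrite -(uniq_b b) ?(uniq_b (block_of x y)).
Qed.

Lemma thirdP x y : x != y ->
  [/\ third x y != x, third x y != y & block_of x y = [set x; y; third x y]].
Proof.
move=> xy; have [Bxy xxy yxy] := block_ofP xy.
rewrite /third; case: pickP => [z /andP[zb /andP[zx zy]] | none] /=.
  split => //; apply/eqP; rewrite eq_sym eqEcard.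
  rewrite cards3 ?(eq_sym x) ?(eq_sym y) // block_card // leqnn andbT.
  by apply/subsetP => w; rewrite !inE => /orP[/orP[]|] /eqP ->.
have : block_of x y \subset [set x; y].
  apply/subsetP => z zb; move: (none z); rewrite zb !inE /=.
  by move/negbT; rewrite negb_and !negbK.
by move/subset_leq_card; rewrite block_card // cards2 xy.
Qed.

Lemma third_in x y : x != y -> third x y \in block_of x y.
Proof. by move=> xy; have [_ _ ->] := thirdP xy; rewrite !inE eqxx !orbT. Qed.

Lemma block_of_mem x y z : x != y -> z \in block_of x y ->
  [|| z == x, z == y | z == third x y].
Proof. by move=> xy; have [_ _ ->] := thirdP xy; rewrite !inE -orbA. Qed.

(* A block is determined by two of its points, hence so is its third point. *)
Lemma third_uniq x y b z : x != y -> b \in B -> x \in b -> y \in b -> z \in b ->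
  z != x -> z != y -> z = third x y.
Proof.
move=> xy Bb xb yb zb zx zy; move: zb; rewrite (block_of_uniq xy Bb xb yb).
by move/(block_of_mem xy); rewrite (negbTE zx) (negbTE zy) => /eqP.
Qed.

Lemma thirdK x y : x != y -> third x (third x y) = y.
Proof.
move=> xy; have [tx ty _] := thirdP xy; have [Bxy xxy yxy] := block_ofP xy.
symmetry; apply: (third_uniq (b := block_of x y)); rewrite 1?eq_sym //.
exact: third_in.
Qed.

End SteinerTripleSystems.

Local Open Scope ring_scope.

Definition F3_elems : seq 'F_3 := [:: 0; 1; 2].

Lemma F3_elemsP (a : 'F_3) : a \in F3_elems.
Proof. by case: a => [[|[|[|a]]] lt_a3] //; rewrite !inE -!val_eqE. Qed.

Lemma F3_forall (P : pred 'F_3) : all P F3_elems -> forall a, P a.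
Proof. by move/allP => allP a; apply: allP; apply: F3_elemsP. Qed.

Lemma F3_forall2 (P : 'F_3 -> pred 'F_3) :
  all (fun a => all (P a) F3_elems) F3_elems -> forall a b, P a b.
Proof. by move/allP => allP a; apply: F3_forall; apply: allP; apply: F3_elemsP. Qed.

Lemma F3_forall3 (P : 'F_3 -> 'F_3 -> pred 'F_3) :
  all (fun a => all (fun b => all (P a b) F3_elems) F3_elems) F3_elems ->
  forall a b c, P a b c.
Proof. by move/allP => allP a; apply: F3_forall2; apply: allP; apply: F3_elemsP. Qed.

Lemma F3_double (a : 'F_3) : - (a + a) = a.
Proof. by apply/eqP; move: a; apply: F3_forall; vm_compute. Qed.

Lemma F3_third_neq (a b : 'F_3) : a != b -> - (a + b) != a.
Proof. by apply/implyP; move: a b; apply: F3_forall2; vm_compute. Qed.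

Lemma F3_cover (a b c : 'F_3) : a != b -> [|| c == a, c == b | c == - (a + b)].
Proof. by apply/implyP; move: a b c; apply: F3_forall3; vm_compute. Qed.

Notation plane := ('F_3 * 'F_3)%type.

Definition plane_elems : seq plane := [seq (a, b) | a <- F3_elems, b <- F3_elems].

Lemma plane_elemsP (v : plane) : v \in plane_elems.
Proof. by case: v => a b; apply/allpairsP; exists (a, b); rewrite !F3_elemsP. Qed.

Lemma plane_forall (P : pred plane) : all P plane_elems -> forall v, P v.
Proof. by move/allP => allP v; apply: allP; apply: plane_elemsP. Qed.

Lemma plane_forall2 (P : plane -> pred plane) :
  all (fun u => all (P u) plane_elems) plane_elems -> forall u v, P u v.
Proof. by move/allP => allP u; apply: plane_forall; apply: allP; apply: plane_elemsP. Qed.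

Lemma plane_forall3 (P : plane -> plane -> pred plane) :
  all (fun u => all (fun v => all (P u v) plane_elems) plane_elems) plane_elems ->
  forall u v w, P u v w.
Proof. by move/allP => allP u; apply: plane_forall2; apply: allP; apply: plane_elemsP. Qed.

(* The four directions of the plane, given by the coefficient vectors of the
   linear forms whose level sets are the three parallel lines of a direction. *)
Definition direction (k : nat) : plane :=
  match k with 0 => (1, 0) | 1 => (0, 1) | 2 => (1, 1) | _ => (1, 2) end.

Definition form (k : nat) (v : plane) : 'F_3 :=
  (direction k).1 * v.1 + (direction k).2 * v.2.

(* The third point of the line through u and v (equal to u when u = v). *)
Definition plane_third (u v : plane) : plane := (- (u.1 + v.1), - (u.2 + v.2)).

Lemma direction_nonzero (k : 'I_4) : ((direction k).1 != 0) || ((direction k).2 != 0).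
Proof. by case: k => [[|[|[|[|k]]]] //= _]; vm_compute. Qed.

(* The forms are linear, so each line of the plane is closed under plane_third. *)
Lemma form_third k u v : form k (plane_third u v) = - (form k u + form k v).
Proof. by rewrite /form /=; ring. Qed.

Lemma plane_third_same u : plane_third u u = u.
Proof. by case: u => a b; rewrite /plane_third /= !F3_double. Qed.

Lemma plane_third_neq u v : u != v -> plane_third u v != u.
Proof. by apply/implyP; move: u v; apply: plane_forall2; vm_compute. Qed.

Lemma plane_thirdC u v : plane_third u v = plane_third v u.
Proof. by rewrite /plane_third addrC [_.2 + _]addrC. Qed.

Lemma plane_thirdK u v : plane_third u (plane_third u v) = v.
Proof. by case: u v => a b [c d]; rewrite /plane_third /= !opprD !opprK !addKr. Qed.

Lemma direction_of u v : u != v -> exists k : 'I_4, form k u = form k v.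
Proof.
move=> uv; suff /hasP[k] : has (fun k => form k u == form k v) (iota 0 4).
  by rewrite mem_iota => lt_k4 /eqP; exists (Ordinal lt_k4).
by move: uv; apply/implyP; move: u v; apply: plane_forall2; vm_compute.
Qed.

Lemma direction_uniq (k k' : 'I_4) u v : u != v ->
  form k u = form k v -> form k' u = form k' v -> k = k'.
Proof.
move=> uv ek ek'; apply/val_inj/eqP.
suff: all (fun k => all (fun k' => all (fun u => all (fun v =>
   (u != v) ==> (form k u == form k v) ==> (form k' u == form k' v) ==> (k == k'))
   plane_elems) plane_elems) (iota 0 4)) (iota 0 4).
  have mem_k (j : 'I_4) : (j : nat) \in iota 0 4 by rewrite mem_iota ltn_ord.
  move=> /allP /(_ _ (mem_k k)) /allP /(_ _ (mem_k k')).
  move=> /allP /(_ _ (plane_elemsP u)) /allP /(_ _ (plane_elemsP v)).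
  by rewrite uv ek ek' !eqxx.
by vm_compute.
Qed.

Lemma plane_line (k : 'I_4) u v w : u != v ->
  form k u = form k v -> form k u = form k w -> [|| w == u, w == v | w == plane_third u v].
Proof.
move=> uv /eqP ekv /eqP ekw.
suff /(_ u v w) : forall u v w, [==> u != v, form k u == form k v,
    form k u == form k w => [|| w == u, w == v | w == plane_third u v]].
  by rewrite uv ekv ekw.
by clear; case: k => [[|[|[|[|k]]]] //= _]; apply: plane_forall3; vm_compute.
Qed.

Lemma line_other (k : 'I_4) u : exists v, v != u /\ form k v = form k u.
Proof.
suff /hasP[v _ /andP[vu /eqP ek]] : has (fun v => (v != u) && (form k v == form k u)) plane_elems.
  by exists v.
by move: u; case: k => [[|[|[|[|k]]]] //= _]; apply: plane_forall; vm_compute.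
Qed.

Lemma form_count v p :
  (\sum_(k < 4) (form k v == form k p) = 1 + 3 * (v == p))%N.
Proof.
rewrite !big_ord_recr big_ord0 /=; apply/eqP; move: v p.
by apply: plane_forall2; vm_compute.
Qed.

Lemma sum_set3 (R : nmodType) (T : finType) (h : T -> R) x y z :
  x != y -> x != z -> y != z -> \sum_(w in [set x; y; z]) h w = h x + h y + h z.
Proof.
move=> xy xz yz; rewrite -setUA big_setU1 /=; last by rewrite !inE negb_or xy xz.
by rewrite big_setU1 /= ?big_set1 ?addrA // inE.
Qed.

Lemma sum_nat_of_bool (T : finType) (P : pred T) :
  (\sum_(x : T) (P x : nat))%N = #|[set x | P x]|.
Proof.
rewrite -sum1_card [RHS]big_mkcond /=; apply: eq_bigr => x _.
by rewrite inE; case: (P x).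
Qed.

Section ZeroSumFunctions.
Variables (T : finType) (B : {set {set T}}).
Hypothesis block_card : forall b, b \in B -> #|b| = 3%N.
Hypothesis pair_block :
  forall x y : T, x != y -> exists! b, b \in B /\ x \in b /\ y \in b.

(* Functions T -> F_3 summing to zero on every block: the vectors orthogonal to
   all rows of the incidence matrix. *)
Definition zero_sum (h : T -> 'F_3) := forall b, b \in B -> \sum_(z in b) h z = 0.

Variable h : T -> 'F_3.
Hypothesis h_zero_sum : zero_sum h.

Lemma zero_sum_third x y : x != y -> h (third B x y) = - (h x + h y).
Proof.
move=> xy; have [tx ty E] := thirdP block_card pair_block xy.
have [Bxy _ _] := block_ofP pair_block xy.
have xt : x != third B x y by rewrite eq_sym.
have yt : y != third B x y by rewrite eq_sym.
have := h_zero_sum Bxy; rewrite E sum_set3 //.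
by move/eqP; rewrite addrC addr_eq0 => /eqP.
Qed.

Definition level (c : 'F_3) : {set T} := [set x | h x == c].

Hypothesis h_nonconstant : exists x y, h x != h y.

(* If h x != h y, the values h x, h y, h (third x y) exhaust F_3. *)
Lemma zero_sum_onto c : exists x, h x = c.
Proof.
have [x [y hxy]] := h_nonconstant; have xy : x != y by apply: contraNneq hxy => ->.
have /or3P[] := F3_cover c hxy => /eqP ->; first by exists x.
  by exists y.
by exists (third B x y); rewrite zero_sum_third.
Qed.

(* For a != a', the map y |-> third z y with h z = -(a + a') injects the
   level a into the level a'. *)
Lemma level_card_le a a' : a != a' -> (#|level a| <= #|level a'|)%N.
Proof.
move=> aa'; have [z hz] := zero_sum_onto (- (a + a')).
have z_out y : y \in level a -> z != y.
  rewrite inE => /eqP hy; apply: contraNneq (F3_third_neq aa') => zy.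
  by rewrite -hz zy hy.
rewrite -(@card_in_imset _ _ (third B z)).
  apply/subset_leq_card/subsetP => _ /imsetP[y ya ->].
  rewrite inE zero_sum_third ?z_out // hz; move: ya; rewrite inE => /eqP ->.
  by rewrite opprD opprK addrC addKr.
move=> y y' ya y'a E.
by rewrite -(thirdK block_card pair_block (z_out _ ya)) E thirdK ?z_out.
Qed.

Lemma level_card c : (3 * #|level c| = #|T|)%N.
Proof.
have level_eq a a' : #|level a| = #|level a'|.
  case: (eqVneq a a') => [-> // | aa'].
  by apply/eqP; rewrite eqn_leq !level_card_le // eq_sym.
have -> : #|T| = (\sum_(a : 'F_3) #|level a|)%N.
  rewrite -sum1_card (partition_big h predT) //=; apply: eq_bigr => a _.
  by rewrite -sum1_card; apply: eq_bigl => x; rewrite inE.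
rewrite (eq_bigr (fun=> #|level c|)) => [|a _]; last exact: level_eq.
by rewrite sum_nat_const card_Fp.
Qed.

End ZeroSumFunctions.

Lemma exists_row_notin (F : fieldType) m1 m2 n (K : 'M[F]_(m1, n)) (W : 'M_(m2, n)) :
  (\rank W < \rank K)%N -> exists u : 'rV_n, (u <= K)%MS /\ ~~ (u <= W)%MS.
Proof.
move=> ltWK; have /row_subPn[i notin_i] : ~~ (K <= W)%MS.
  by apply: contraTN ltWK => /mxrankS; rewrite leqNgt.
by exists (row i K); rewrite row_sub.
Qed.

Lemma combination_notin (F : fieldType) m n (W : 'M[F]_(m, n)) (u1 u2 : 'rV_n) a c :
  ~~ (u1 <= W)%MS -> ~~ (u2 <= W + u1)%MS -> (a != 0) || (c != 0) ->
  ~~ ((a *: u1 + c *: u2)%R <= W)%MS.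
Proof.
move=> u1W u2W ac; case: (eqVneq c 0) => [c0 | c_neq0].
  move: ac; rewrite c0 eqxx orbF scale0r addr0 => a_neq0.
  by apply: contraNN u1W => inW; rewrite -[u1](scalerK a_neq0) scalemx_sub.
apply: contraNN u2W => inW.
rewrite -[u2](scalerK c_neq0) scalemx_sub // -[c *: u2](addKr (a *: u1)) -scaleNr.
by rewrite addmx_sub ?scalemx_sub ?addsmxSr // (submx_trans inW) ?addsmxSl.
Qed.

Section RankBound.
Variables (T : finType) (B : {set {set T}}).

Definition point_fun (u : 'rV['F_3]_#|T|) (x : T) : 'F_3 := u 0 (enum_rank x).

Lemma kernel_zero_sum (u : 'rV_#|T|) :
  (u <= kermx (incidence_mx 'F_3 B)^T)%MS -> zero_sum B (point_fun u).
Proof.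
move=> /sub_kermxP uK b Bb.
have := congr1 (fun v : 'rV_#|B| => v 0 (enum_rank_in Bb b)) uK.
rewrite !mxE => {}uK; apply: etrans uK; rewrite big_mkcond /=.
rewrite (reindex (@enum_val T T)); last by apply: onW_bij; apply: enum_val_bij.
apply: eq_bigr => j _; rewrite /point_fun !mxE enum_valK enum_rankK_in //.
by case: ifP => _; rewrite ?mulr1 ?mulr0.
Qed.

Definition all_one : 'rV['F_3]_#|T| := const_mx 1.

Lemma constant_point_fun (u : 'rV['F_3]_#|T|) x0 :
  (forall x, point_fun u x = point_fun u x0) -> (u <= all_one)%MS.
Proof.
move=> u_const; have -> : u = point_fun u x0 *: all_one.
  by apply/rowP => j; rewrite !mxE mulr1 -(u_const (enum_val j)) /point_fun enum_valK.
exact: scalemx_sub.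
Qed.

Lemma two_independent_zero_sums : (3 + p_rank 3 B <= #|T|)%N ->
  exists f g : T -> 'F_3, [/\ zero_sum B f, zero_sum B g &
    forall a c : 'F_3, (a != 0) || (c != 0) ->
      exists x y, a * f x + c * g x != a * f y + c * g y].
Proof.
move=> rank_le; set K := kermx (incidence_mx 'F_3 B)^T.
have rankK : (3 <= \rank K)%N by rewrite mxrank_ker mxrank_tr; move: rank_le; rewrite /p_rank; lia.
have [u1 [u1K u1_out]] : exists u1 : 'rV_#|T|, (u1 <= K)%MS /\ ~~ (u1 <= all_one)%MS.
  by apply: exists_row_notin; apply: leq_ltn_trans (rank_leq_row all_one) _; lia.
have [u2 [u2K u2_out]] : exists u2 : 'rV_#|T|, (u2 <= K)%MS /\ ~~ (u2 <= all_one + u1)%MS.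
  apply: exists_row_notin; apply: leq_ltn_trans (mxrank_adds_leqif _ _) _.
  by apply: leq_ltn_trans (leq_add (rank_leq_row all_one) (rank_leq_row u1)) _; lia.
exists (point_fun u1), (point_fun u2); split; try exact: kernel_zero_sum.
move=> a c ac; have [x0 _] : exists x0 : T, x0 \in T.
  by apply/card_gt0P; apply: leq_trans rank_le.
case: (boolP [exists x, exists y, a * point_fun u1 x + c * point_fun u2 x
                 != a * point_fun u1 y + c * point_fun u2 y]).
  by move=> /existsP[x /existsP[y ne]]; exists x, y.
(* A constant a f + c g would put a u1 + c u2 in the span of all_one. *)
move=> all_eq; case/negP: (combination_notin u1_out u2_out ac).
apply: (constant_point_fun (x0 := x0)) => x; rewrite /point_fun !mxE.
move: all_eq; rewrite negb_exists => /forallP /(_ x).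
by rewrite negb_exists => /forallP /(_ x0) /negPn /eqP.
Qed.

End RankBound.

Section AffineProjection.
Variables (T : finType) (B : {set {set T}}).
Hypothesis block_card : forall b, b \in B -> #|b| = 3%N.
Hypothesis pair_block :
  forall x y : T, x != y -> exists! b, b \in B /\ x \in b /\ y \in b.
Hypothesis card27 : #|T| = 27%N.
Variables f g : T -> 'F_3.
Hypothesis f_zero_sum : zero_sum B f.
Hypothesis g_zero_sum : zero_sum B g.
Hypothesis independent : forall a c : 'F_3, (a != 0) || (c != 0) ->
  exists x y, a * f x + c * g x != a * f y + c * g y.

Local Notation block_of := (block_of B).
Local Notation third := (third B).

Definition phi (x : T) : plane := (f x, g x).

Definition fibre (p : plane) : {set T} := [set x | phi x == p].
Definition line (k : nat) (c : 'F_3) : {set T} := [set x | form k (phi x) == c].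

Lemma phi_neq x y : phi x != phi y -> x != y.
Proof. by apply: contraNneq => ->. Qed.

Lemma phi_third x y : x != y -> phi (third x y) = plane_third (phi x) (phi y).
Proof. by move=> xy; rewrite /phi /plane_third /= !(zero_sum_third block_card pair_block). Qed.

(* Each form k o phi is a nonconstant zero-sum function, so over each of the
   12 lines of the plane lie 9 points. *)
Lemma line_card (k : 'I_4) c : #|line k c| = 9%N.
Proof.
have form_zero_sum : zero_sum B (fun x => form k (phi x)).
  move=> b Bb; rewrite /form /phi /= big_split /= -!mulr_sumr.
  by rewrite f_zero_sum // g_zero_sum // !mulr0 addr0.
have [x [y nconst]] := independent (direction_nonzero k).
have nonconst : exists x y, form k (phi x) != form k (phi y) by exists x, y.
have := level_card block_card pair_block form_zero_sum nonconst c.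
by rewrite card27; change ((3 * #|line k c|)%N = 27%N -> #|line k c| = 9%N); lia.
Qed.
(* The fibre over a point p of the plane has 3 points: counting the incidences
   of T with the four lines through p, a point of the fibre lies on all four
   and every other point on exactly one. *)
Lemma fibre_card p : #|fibre p| = 3%N.
Proof.
pose incidences := (\sum_(x : T) \sum_(k < 4) (form k (phi x) == form k p))%N.
have by_points : incidences = (27 + 3 * #|fibre p|)%N.
  rewrite /incidences (eq_bigr _ (fun x _ => form_count (phi x) p)) big_split /=.
  by rewrite -big_distrr /= sum_nat_of_bool sum1_card card27.
have by_lines : incidences = 36%N.
  rewrite /incidences exchange_big /= (eq_bigr (fun=> 9%N)) => [|k _].
    by rewrite sum_nat_const card_ord.
  by rewrite sum_nat_of_bool line_card.
by move: by_points; rewrite by_lines; lia.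
Qed.

Definition vertical (b : {set T}) : bool :=
  [forall x in b, forall y in b, phi x == phi y].

(* Every fibre is a (vertical) block: the block through two of its points has
   its third point over plane_third p p = p. *)
Lemma fibre_block x : fibre (phi x) \in B.
Proof.
have : (1 < #|fibre (phi x) :\ x|)%N.
  by move: (cardsD1 x (fibre (phi x))); rewrite fibre_card inE eqxx /=; lia.
case/card_gt1P => y [_ [yx _ _]]; move: yx; rewrite !inE => /andP[yx /eqP phi_y].
have xy : x != y by rewrite eq_sym.
have [Bxy _ _] := block_ofP pair_block xy.
suff -> : fibre (phi x) = block_of x y by [].
apply/eqP; rewrite eq_sym eqEcard (block_card Bxy) fibre_card leqnn andbT.
apply/subsetP => z /(block_of_mem block_card pair_block xy) /or3P[] /eqP ->; rewrite inE //.
  by rewrite phi_y.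
by rewrite phi_third // phi_y plane_third_same.
Qed.

Lemma fibre_vertical p : vertical (fibre p).
Proof.
apply/forallP => x; apply/implyP; rewrite inE => /eqP ->.
by apply/forallP => y; apply/implyP; rewrite inE => /eqP ->.
Qed.

Lemma vertical_sub_fibre b x : vertical b -> x \in b -> b \subset fibre (phi x).
Proof.
move=> /forallP vb xb; apply/subsetP => y yb; rewrite inE.
by move: (vb y); rewrite yb /= => /forallP /(_ x); rewrite xb.
Qed.

Lemma nonvertical_pair b : ~~ vertical b ->
  exists x y, [/\ x \in b, y \in b & phi x != phi y].
Proof.
rewrite negb_forall => /existsP[x]; rewrite negb_imply negb_forall.
by case/andP => xb /existsP[y]; rewrite negb_imply => /andP[yb ne]; exists x, y.
Qed.

(* phi is injective on a non-vertical block: two points of a block with the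
   same image force the whole block into one fibre. *)
Lemma nonvertical_inj b x y : b \in B -> ~~ vertical b -> x \in b -> y \in b ->
  phi x = phi y -> x = y.
Proof.
move=> Bb nvb xb yb phi_xy; apply/eqP; apply: contraNT nvb => xy.
have phi_t : phi (third x y) = phi x by rewrite phi_third // -phi_xy plane_third_same.
rewrite (block_of_uniq pair_block xy Bb xb yb).
apply/forallP => z; apply/implyP => /(block_of_mem block_card pair_block xy) zb.
apply/forallP => w; apply/implyP => /(block_of_mem block_card pair_block xy) wb.
by case/or3P: zb => /eqP ->; case/or3P: wb => /eqP ->; rewrite ?phi_t ?phi_xy.
Qed.

(* The non-vertical blocks inside the line (k, c).  With the 9 points over the
   line and its three fibres they form an affine plane of order 3, whose
   parallelism is studied below. *)
Definition cross (k : nat) (c : 'F_3) : {set {set T}} :=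
  [set b in B | (b \subset line k c) && ~~ vertical b].

Lemma cross_block k c b : b \in cross k c -> b \in B.
Proof. by rewrite inE => /andP[]. Qed.

Lemma cross_nonvertical k c b : b \in cross k c -> ~~ vertical b.
Proof. by rewrite inE => /and3P[]. Qed.

Lemma cross_line k c b x : b \in cross k c -> x \in b -> form k (phi x) = c.
Proof. by rewrite inE => /and3P[_ /subsetP sub_b _] /sub_b; rewrite inE => /eqP. Qed.

Lemma block_cross k x y : phi x != phi y -> form k (phi x) = form k (phi y) ->
  block_of x y \in cross k (form k (phi x)).
Proof.
move=> ne ek; have xy := phi_neq ne; have [Bxy xb yb] := block_ofP pair_block xy.
rewrite inE Bxy /=; apply/andP; split.
  apply/subsetP => z /(block_of_mem block_card pair_block xy) /or3P[] /eqP ->.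
  - by rewrite inE.
  - by rewrite inE ek.
  by rewrite inE phi_third // form_third -ek F3_double.
apply: contraNN ne => /forallP /(_ x); rewrite xb /= => /forallP /(_ y).
by rewrite yb.
Qed.

Lemma cross_cover (k : 'I_4) c b v : b \in cross k c -> form k v = c ->
  exists2 y, y \in b & phi y = v.
Proof.
move=> bc vc; have [x [y [xb yb ne]]] := nonvertical_pair (cross_nonvertical bc).
have xy := phi_neq ne.
have := plane_line ne (etrans (cross_line bc xb) (esym (cross_line bc yb)))
  (etrans (cross_line bc xb) (esym vc)).
case/or3P => /eqP ->; [by exists x | by exists y |].
exists (third x y); last by rewrite phi_third.
by rewrite (block_of_uniq pair_block xy (cross_block bc) xb yb) third_in.
Qed.

Lemma cross_relabel (k : 'I_4) c b x : b \in cross k c -> form k (phi x) = c ->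
  exists u v, [/\ phi u != phi v, b = block_of u v & phi x = phi (third u v)].
Proof.
move=> bc xc; have [u [v [ub vb ne]]] := nonvertical_pair (cross_nonvertical bc).
have uv := phi_neq ne; have Bb := cross_block bc.
have Eb := block_of_uniq pair_block uv Bb ub vb.
have wb : third u v \in b by rewrite Eb third_in.
have [wu wv _] := thirdP block_card pair_block uv.
have phi_w : phi (third u v) = plane_third (phi u) (phi v) by rewrite phi_third.
have := plane_line ne (etrans (cross_line bc ub) (esym (cross_line bc vb)))
  (etrans (cross_line bc ub) (esym xc)).
case/or3P => /eqP ->.
- exists v, (third u v); split.
  + by rewrite phi_w plane_thirdC eq_sym plane_third_neq // eq_sym.
  + by apply: block_of_uniq; rewrite // eq_sym.
  + by congr phi; apply: (third_uniq block_card pair_block (b := b)); rewrite // eq_sym.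
- exists u, (third u v); split.
  + by rewrite phi_w eq_sym plane_third_neq.
  + by apply: block_of_uniq; rewrite // eq_sym.
  + by congr phi; apply: (third_uniq block_card pair_block (b := b)); rewrite // eq_sym.
- by exists u, v; rewrite -phi_w.
Qed.

(* For y over u, the block through x and y has its third point over
   v; exactly one such block is disjoint from block_of u v. *)
Section DisjointPartner.
Variables u v x : T.
Hypothesis uv : phi u != phi v.
Hypothesis x_out : x \notin block_of u v.
Hypothesis x_over : phi x = phi (third u v).

Lemma x_neq_over_u y : phi y = phi u -> x != y.
Proof.
move=> phi_y; apply: phi_neq; rewrite phi_y x_over phi_third ?phi_neq //.
exact: plane_third_neq.
Qed.

Lemma third_over_v y : phi y = phi u -> phi (third x y) = phi v.
Proof.
move=> phi_y; rewrite phi_third ?x_neq_over_u // x_over phi_third ?phi_neq // phi_y.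
by rewrite plane_thirdC plane_thirdK.
Qed.

Lemma third_xu_neq_v : third x u != v.
Proof.
have xu : x != u by apply: x_neq_over_u.
have [Bxu xb ub] := block_ofP pair_block xu.
apply: contraNneq x_out => tv.
have vb : v \in block_of x u by rewrite -tv third_in.
by rewrite -(block_of_uniq pair_block (phi_neq uv) Bxu ub vb).
Qed.

Lemma disjoint_partner_ex : exists y, [/\ phi y = phi u, y != u & third x y != v].
Proof.
have : #|fibre (phi u) :\ u| == 2%N.
  by move: (cardsD1 u (fibre (phi u))); rewrite fibre_card inE eqxx /=; lia.
case/cards2P => y1 [y2 [y12 E]].
have : y1 \in fibre (phi u) :\ u by rewrite E !inE eqxx.
have : y2 \in fibre (phi u) :\ u by rewrite E !inE eqxx orbT.
rewrite !inE => /andP[y2u /eqP phi_y2] /andP[y1u /eqP phi_y1].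
case: (eqVneq (third x y1) v) => [t1v | ]; last by exists y1.
case: (eqVneq (third x y2) v) => [t2v | ]; last by exists y2.
move: y12; rewrite -(thirdK block_card pair_block (x_neq_over_u phi_y1)) t1v -t2v.
by rewrite thirdK ?eqxx // x_neq_over_u.
Qed.

(* Uniqueness: y |-> third x y injects {u, y1, y2} into fibre (phi v) :\ v,
   which has only two points. *)
Lemma disjoint_partner_uniq y1 y2 :
  phi y1 = phi u -> y1 != u -> third x y1 != v ->
  phi y2 = phi u -> y2 != u -> third x y2 != v -> y1 = y2.
Proof.
move=> phi_y1 y1u t1v phi_y2 y2u t2v; apply/eqP; apply: contraT => y12.
have over_u a : a \in [set u; y1; y2] -> phi a = phi u.
  by rewrite !inE => /orP[/orP[]|] /eqP ->.
have inj : {in [set u; y1; y2] &, injective (third x)}.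
  move=> a a' /over_u phi_a /over_u phi_a' E.
  by rewrite -(thirdK block_card pair_block (x_neq_over_u phi_a)) E thirdK // x_neq_over_u.
have sub : [set third x a | a in [set u; y1; y2]] \subset fibre (phi v) :\ v.
  apply/subsetP => _ /imsetP[a au ->]; have phi_a := over_u a au.
  rewrite !inE third_over_v // eqxx andbT.
  by move: au; rewrite !inE => /orP[/orP[]|] /eqP ->; rewrite ?third_xu_neq_v.
have [uy1 uy2] : u != y1 /\ u != y2 by rewrite ![u == _]eq_sym.
move: (subset_leq_card sub); rewrite card_in_imset // cards3 //.
by move: (cardsD1 v (fibre (phi v))); rewrite fibre_card inE eqxx /=; lia.
Qed.

End DisjointPartner.

Definition parallel (b b' : {set T}) : bool := (b == b') || [disjoint b & b'].

Lemma parallel_sym b b' : parallel b b' = parallel b' b.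
Proof. by rewrite /parallel eq_sym disjoint_sym. Qed.

Lemma parallel_through (k : 'I_4) c b x : b \in cross k c -> form k (phi x) = c ->
  exists b', [/\ b' \in cross k c, x \in b' & parallel b b'].
Proof.
move=> bc xc; have [xb | x_out] := boolP (x \in b).
  by exists b; rewrite /parallel eqxx.
have [u [v [uv Eb x_over]]] := cross_relabel bc xc.
rewrite Eb in bc x_out *.
have [y [phi_y yu tv]] := disjoint_partner_ex uv x_out x_over.
have xy := x_neq_over_u uv x_over phi_y.
have [Buv ub vb] := block_ofP pair_block (phi_neq uv).
exists (block_of x y); split.
- rewrite -xc; apply: block_cross; last by rewrite phi_y (cross_line bc ub).
  by rewrite phi_y x_over phi_third ?phi_neq // plane_third_neq.
- by have [] := block_ofP pair_block xy.
- rewrite /parallel disjoint_sym disjoint_subset; apply/orP; right.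
  apply/subsetP => z /(block_of_mem block_card pair_block xy) /or3P[] /eqP ->.
  + by rewrite inE.
  + apply: contra yu => yb; apply/eqP.
    exact: nonvertical_inj Buv (cross_nonvertical bc) yb ub phi_y.
  + apply: contra tv => tb; apply/eqP.
    exact: nonvertical_inj Buv (cross_nonvertical bc) tb vb (third_over_v uv x_over phi_y).
Qed.

Lemma parallel_block_shape (k : 'I_4) c u v x b' :
  phi u != phi v -> x \notin block_of u v -> phi x = phi (third u v) ->
  block_of u v \in cross k c -> b' \in cross k c -> x \in b' -> parallel (block_of u v) b' ->
  exists y, [/\ b' = block_of x y, phi y = phi u, y != u & third x y != v].
Proof.
move=> uv x_out x_over bc b'c xb' par.
have [Buv ub vb] := block_ofP pair_block (phi_neq uv).
have disj : [disjoint block_of u v & b'].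
  by case/orP: par => [/eqP E | //]; move: x_out; rewrite E xb'.
have [y yb' phi_y] := cross_cover b'c (cross_line bc ub).
have xy := x_neq_over_u uv x_over phi_y.
have Eb' := block_of_uniq pair_block xy (cross_block b'c) xb' yb'.
exists y; split => //.
- by apply: contraTneq yb' => ->; rewrite (disjointFr disj ub).
- apply: contraTneq (third_in block_card pair_block xy) => tv.
  by rewrite tv -Eb' (disjointFr disj vb).
Qed.

Lemma parallel_through_uniq (k : 'I_4) c b x b1 b2 :
  b \in cross k c -> b1 \in cross k c -> b2 \in cross k c ->
  x \in b1 -> x \in b2 -> parallel b b1 -> parallel b b2 -> b1 = b2.
Proof.
move=> bc b1c b2c xb1 xb2 par1 par2.
have [xb | x_out] := boolP (x \in b).
  move: par1 par2; rewrite /parallel.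
  case/orP => [/eqP <- | D1]; last by rewrite (disjointFr D1 xb) in xb1.
  by case/orP => [/eqP <- // | D2]; rewrite (disjointFr D2 xb) in xb2.
have [u [v [uv Eb x_over]]] := cross_relabel bc (cross_line b1c xb1).
rewrite Eb in bc x_out par1 par2.
have [y1 [-> phi_y1 y1u t1v]] := parallel_block_shape uv x_out x_over bc b1c xb1 par1.
have [y2 [-> phi_y2 y2u t2v]] := parallel_block_shape uv x_out x_over bc b2c xb2 par2.
by rewrite (disjoint_partner_uniq uv x_out x_over phi_y1 y1u t1v phi_y2 y2u t2v).
Qed.

Lemma parallel_trans (k : 'I_4) c b1 b2 b3 :
  b1 \in cross k c -> b2 \in cross k c -> b3 \in cross k c ->
  parallel b1 b2 -> parallel b2 b3 -> parallel b1 b3.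
Proof.
move=> b1c b2c b3c par12 par23.
have [-> | b13] := eqVneq b1 b3; first by rewrite /parallel eqxx.
apply/orP; right; rewrite disjoint_subset; apply/subsetP => z zb1; rewrite inE.
apply: contra_neqN b13 => zb3.
by apply: (parallel_through_uniq b2c b1c b3c zb1 zb3); rewrite // parallel_sym.
Qed.

(* To index the parallel classes of a line consistently across the three
   parallel lines of a direction, we fix a base point on each line; the three
   cross blocks through it represent the three classes. *)
Variable x0 : T.

Definition base_point (k : nat) (c : 'F_3) : T := odflt x0 [pick x in line k c].

Lemma base_point_line (k : 'I_4) c : form k (phi (base_point k c)) = c.
Proof.
rewrite /base_point; case: pickP => [x | none] /=; first by rewrite inE => /eqP.
by have := line_card k c; rewrite (eq_card0 none).
Qed.

Definition base_blocks (k : nat) (c : 'F_3) : {set {set T}} :=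
  [set b in cross k c | base_point k c \in b].

Lemma base_blocks_fibre (k : 'I_4) c v : v != phi (base_point k c) -> form k v = c ->
  base_blocks k c = [set block_of (base_point k c) y | y in fibre v].
Proof.
set r := base_point k c => vr vc; have rc : form k (phi r) = c := base_point_line k c.
apply/setP => b; rewrite inE; apply/andP/imsetP => [[bc rb] | [y]].
  have [y yb phi_y] := cross_cover bc vc.
  exists y; first by rewrite inE phi_y.
  apply: block_of_uniq (cross_block bc) rb yb => //.
  by apply: phi_neq; rewrite phi_y eq_sym.
rewrite inE => /eqP phi_y ->; have ry : phi r != phi y by rewrite phi_y eq_sym.
split; last by have [] := block_ofP pair_block (phi_neq ry).
by rewrite -[in cross k c]rc; apply: block_cross => //; rewrite phi_y vc.
Qed.

Lemma base_blocks_card (k : 'I_4) c : #|base_blocks k c| = 3%N.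
Proof.
set r := base_point k c; have rc : form k (phi r) = c := base_point_line k c.
have [v [vr vc]] := line_other k (phi r); rewrite rc in vc.
rewrite (base_blocks_fibre vr vc) card_in_imset ?fibre_card // => y y'.
rewrite !inE => /eqP phi_y /eqP phi_y' E.
have ry : phi r != phi y by rewrite phi_y eq_sym.
have [Bry _ y_in] := block_ofP pair_block (phi_neq ry).
have ryc : block_of r y \in cross k c by rewrite -[c]rc block_cross // phi_y vc.
apply: (nonvertical_inj Bry (cross_nonvertical ryc)) => //; last by rewrite phi_y phi_y'.
have ry' : phi r != phi y' by rewrite phi_y' eq_sym.
by rewrite E; have [] := block_ofP pair_block (phi_neq ry').
Qed.

Definition base_parallel (k : nat) (c : 'F_3) (b : {set T}) : {set T} :=
  odflt set0 [pick b' in base_blocks k c | parallel b b'].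

Definition parallel_index (k : nat) (c : 'F_3) (b : {set T}) : nat :=
  index (base_parallel k c b) (enum (base_blocks k c)).

Lemma base_parallelP (k : 'I_4) c b : b \in cross k c ->
  base_parallel k c b \in base_blocks k c /\ parallel b (base_parallel k c b).
Proof.
move=> bc; rewrite /base_parallel; case: pickP => [b' /andP[] // | none] /=.
have [b' [b'c rb' par]] := parallel_through bc (base_point_line k c).
by move: (none b'); rewrite inE b'c rb' par.
Qed.

Lemma base_parallel_uniq (k : 'I_4) c b b' : b \in cross k c ->
  b' \in base_blocks k c -> parallel b b' -> base_parallel k c b = b'.
Proof.
move=> bc; rewrite inE => /andP[b'c rb'] par.
have [] := base_parallelP bc; rewrite inE => /andP[pc rp] par_p.
exact: parallel_through_uniq bc pc b'c rp rb' par_p par.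
Qed.

Lemma parallel_index_inj (k : 'I_4) c b1 b2 : b1 \in cross k c -> b2 \in cross k c ->
  parallel_index k c b1 = parallel_index k c b2 -> parallel b1 b2.
Proof.
move=> b1c b2c E; have [p1 par1] := base_parallelP b1c; have [p2 par2] := base_parallelP b2c.
have E' : base_parallel k c b1 = base_parallel k c b2.
  have p1e : base_parallel k c b1 \in enum (base_blocks k c) by rewrite mem_enum.
  rewrite -(nth_index set0 p1e).
  by rewrite -/(parallel_index k c b1) E nth_index ?mem_enum.
have p1c : base_parallel k c b1 \in cross k c by move: p1; rewrite inE => /andP[].
by apply: (parallel_trans b1c p1c b2c par1); rewrite E' parallel_sym.
Qed.

Lemma parallel_index_lt (k : 'I_4) c b : b \in cross k c -> (parallel_index k c b < 3)%N.
Proof.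
move=> bc; have [p _] := base_parallelP bc.
by rewrite /parallel_index -[X in (_ < X)%N](base_blocks_card k c) cardE index_mem mem_enum.
Qed.

Definition rep (b : {set T}) : T := odflt x0 [pick x in b].

Definition block_direction (b : {set T}) : option 'I_4 :=
  [pick k : 'I_4 | b \in cross k (form k (phi (rep b)))].

Definition colour (b : {set T}) : option ('I_4 * nat) :=
  if block_direction b is Some k then Some (k, parallel_index k (form k (phi (rep b))) b)
  else None.

Lemma rep_in b : b \in B -> rep b \in b.
Proof.
move=> Bb; rewrite /rep; case: pickP => [x // | none].
by move: (block_card Bb); rewrite (eq_card0 none).
Qed.

(* A cross block belongs to the lines of a single direction. *)
Lemma colour_cross (k : 'I_4) c b : b \in cross k c ->
  colour b = Some (k, parallel_index k c b).
Proof.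
move=> bc; have rep_c := cross_line bc (rep_in (cross_block bc)).
rewrite /colour /block_direction; case: pickP => [k' k'c | none]; last first.
  by move: (none k); rewrite rep_c bc.
have [x [y [xb yb ne]]] := nonvertical_pair (cross_nonvertical bc).
suff -> : k' = k by rewrite rep_c.
apply: (direction_uniq ne).
  by rewrite (cross_line k'c xb) (cross_line k'c yb).
by rewrite (cross_line bc xb) (cross_line bc yb).
Qed.

Lemma colour_SomeP b x k i : b \in B -> x \in b -> colour b = Some (k, i) ->
  b \in cross k (form k (phi x)) /\ parallel_index k (form k (phi x)) b = i.
Proof.
move=> Bb xb; rewrite /colour /block_direction; case: pickP => [k' k'c | //].
by case=> <- <-; rewrite (cross_line k'c xb).
Qed.

Lemma colour_vertical b : vertical b -> colour b = None.
Proof.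
move=> vb; rewrite /colour /block_direction; case: pickP => [k kc | //].
by move: (cross_nonvertical kc); rewrite vb.
Qed.

Lemma nonvertical_cross b : b \in B -> ~~ vertical b ->
  exists (k : 'I_4) c, b \in cross k c.
Proof.
move=> Bb nvb; have [x [y [xb yb ne]]] := nonvertical_pair nvb.
have [k ek] := direction_of ne; exists k, (form k (phi x)).
by rewrite (block_of_uniq pair_block (phi_neq ne) Bb xb yb) block_cross.
Qed.

Lemma colour_NoneP b : b \in B -> colour b = None -> vertical b.
Proof.
move=> Bb col_b; apply: contraT => nvb; have [k [c bc]] := nonvertical_cross Bb nvb.
by rewrite (colour_cross bc) in col_b.
Qed.

(* Each colour class partitions T: for vertical blocks it is the set of fibres, *)
Lemma colour_exact_vertical b : vertical b ->
  forall x, exists! b', [/\ b' \in B, x \in b' & colour b' = colour b].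
Proof.
move=> vb x; rewrite (colour_vertical vb); exists (fibre (phi x)); split.
  by split; [exact: fibre_block | rewrite inE | exact: colour_vertical (fibre_vertical _)].
move=> b' [Bb' xb' /(colour_NoneP Bb') vb'].
apply/eqP; rewrite eq_sym eqEcard (vertical_sub_fibre vb' xb') (block_card Bb').
by rewrite fibre_card.
Qed.

(* and for a cross block it consists of one parallel class in each of the
   three parallel lines of its direction. *)
Lemma colour_exact_cross (k : 'I_4) c b : b \in cross k c ->
  forall x, exists! b', [/\ b' \in B, x \in b' & colour b' = colour b].
Proof.
move=> bc x; set c' := form k (phi x); set i := parallel_index k c b.
have size_base : size (enum (base_blocks k c')) = 3%N by rewrite -cardE base_blocks_card.
set r := nth set0 (enum (base_blocks k c')) i.
have rb : r \in base_blocks k c'.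
  by rewrite -mem_enum mem_nth // size_base parallel_index_lt.
have rc : r \in cross k c' by move: rb; rewrite inE => /andP[].
have [b' [b'c xb' par]] := parallel_through rc (erefl c').
have idx_b' : parallel_index k c' b' = i.
  rewrite /parallel_index (base_parallel_uniq b'c rb) 1?parallel_sym //.
  by rewrite index_uniq ?enum_uniq // size_base parallel_index_lt.
rewrite (colour_cross bc); exists b'; split.
  by split; [exact: cross_block b'c | exact: xb' | rewrite (colour_cross b'c) idx_b'].
move=> b1 [Bb1 xb1 col1]; have [b1c idx1] := colour_SomeP Bb1 xb1 col1.
have := parallel_index_inj b1c b'c (etrans idx1 (esym idx_b')).
by case/orP => [/eqP -> // | D]; rewrite (disjointFr D xb1) in xb'.
Qed.

Lemma colour_exact b : b \in B ->
  forall x, exists! b', [/\ b' \in B, x \in b' & colour b' = colour b].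
Proof.
move=> Bb; have [vb | nvb] := boolP (vertical b); first exact: colour_exact_vertical.
by have [k [c bc]] := nonvertical_cross Bb nvb; exact: colour_exact_cross bc.
Qed.

End AffineProjection.

Local Close Scope ring_scope.

Theorem proposition3p3 (T : finType) (B : {set {set T}}) :
  #|T| = 27 -> is_STS B -> (p_rank 3 B <= 24)%N -> resolvable B.
Proof.
move=> card27 [block_card pair_block] rank_le.
have /two_independent_zero_sums[f [g [f_zero_sum g_zero_sum independent]]] :
  3 + p_rank 3 B <= #|T| by rewrite card27; lia.
have [x0 _] : exists x0 : T, x0 \in T by apply/card_gt0P; rewrite card27.
apply: (resolvable_of_colouring (colour := colour B f g x0)).
  by apply/negP => /block_card; rewrite cards0.
move=> b; exact: (colour_exact block_card pair_block card27 f_zero_sum g_zero_sum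
  independent x0).
Qed.
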